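(* Let $m\ge3$ be odd, $n\ge 2$, and let $\mathcal{A}$ be a real symmetric $m$th order $n$-dimensional tensor. If $\mathcal{A}$ is strongly positive semi-definite, then $\mathcal{A}$ is genuinely positive semi-definite. If furthermore $\mathcal{A}$ is strongly positive definite, then $\mathcal{A}$ is genuinely positive definite.
   Context: For $\mathbf{x}\in\mathbb{R}^n$, $\mathcal{A}\mathbf{x}^{m-1}$ is the vector with $i$th component $\sum_{i_2,\dots,i_m=1}^n a_{ii_2\dots i_m}x_{i_2}\cdots x_{i_m}$, and $\mathbf{x}^{[m-1]}=(x_i^{m-1})_i$. $\mathcal{A}$ is strongly positive semi-definite if $\mathcal{A}\mathbf{x}^{m-1}\ge\mathbf{0}$ componentwise for all $\mathbf{x}\in\mathbb{R}^n$, and strongly positive definite if $\mathcal{A}\mathbf{x}^{m-1}>\mathbf{0}$ componentwise for all nonzero $\mathbf{x}$. A real $\lambda$ is an H-eigenvalue of $\mathcal{A}$ if there is a nonzero $\mathbf{x}\in\mathbb{R}^n$ with $\mathcal{A}\mathbf{x}^{m-1}=\lambda\mathbf{x}^{[m-1]}$. A tensor is genuinely positive semi-definite (resp. genuinely positive definite) if its symmetrization (here $\mathcal{A}$ itself) has at least one H-eigenvalue and all its H-eigenvalues are nonnegative (resp. positive). *)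

From mathcomp Require Import all_boot all_order all_fingroup all_algebra.
From mathcomp Require Import reals.
Set Implicit Arguments. Unset Strict Implicit. Unset Printing Implicit Defensive.
Import Order.TTheory GRing.Theory Num.Theory.
Local Open Scope ring_scope.

Definition tensor (R : realType) (m n : nat) := {ffun 'I_m -> 'I_n} -> R.

Definition symmetric_tensor (R : realType) (m n : nat) (A : tensor R m n) :=
  forall (s : {perm 'I_m}) (idx : {ffun 'I_m -> 'I_n}),
    A [ffun k => idx (s k)] = A idx.

(* the multi-index (i, j_1, ..., j_{m-1}) *)
Definition cons_idx (m n : nat) (i : 'I_n) (j : {ffun 'I_m.-1 -> 'I_n})
  : {ffun 'I_m -> 'I_n} :=
  [ffun k : 'I_m => if val k == 0%N then i
   else odflt i (omap j (insub (val k).-1 : option 'I_m.-1))].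

(* (A x^{m-1})_i = sum_{i_2..i_m} a_{i i_2 .. i_m} x_{i_2} ... x_{i_m} *)
Definition tapply (R : realType) (m n : nat) (A : tensor R m n)
  (x : 'I_n -> R) (i : 'I_n) : R :=
  \sum_(j : {ffun 'I_m.-1 -> 'I_n}) A (cons_idx i j) * \prod_(k < m.-1) x (j k).

Definition strongly_psd (R : realType) (m n : nat) (A : tensor R m n) :=
  forall x : 'I_n -> R, forall i, 0 <= tapply A x i.

Definition strongly_pd (R : realType) (m n : nat) (A : tensor R m n) :=
  forall x : 'I_n -> R, (exists i, x i != 0) -> forall i, 0 < tapply A x i.

Definition H_eigenvalue (R : realType) (m n : nat) (A : tensor R m n)
  (lambda : R) :=
  exists x : 'I_n -> R, (exists i, x i != 0) /\
    forall i, tapply A x i = lambda * x i ^+ m.-1.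

(* For a symmetric tensor, its symmetrization is A itself. *)
Definition genuinely_psd (R : realType) (m n : nat) (A : tensor R m n) :=
  (exists lambda, H_eigenvalue A lambda) /\
  (forall lambda, H_eigenvalue A lambda -> 0 <= lambda).

Definition genuinely_pd (R : realType) (m n : nat) (A : tensor R m n) :=
  (exists lambda, H_eigenvalue A lambda) /\
  (forall lambda, H_eigenvalue A lambda -> 0 < lambda).

From mathcomp Require Import all_boot all_order all_fingroup all_algebra.
From mathcomp Require Import reals boolp classical_sets topology normedtype.
From mathcomp Require Import derive.
From mathcomp Require Import ring lra.
Set Implicit Arguments. Unset Strict Implicit. Unset Printing Implicit Defensive.
Import Order.TTheory GRing.Theory Num.Theory.
Import numFieldNormedType.Exports.
Local Open Scope classical_set_scope.
Local Open Scope ring_scope.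

(* Write the order as m + 1 (so m is even) and maximize the quotient
   A x^(m+1) / sum_i x_i^(m+1) over the standard simplex; let c be a maximizer
   and lambda the maximum.  Moving c along a coordinate direction e_j changes
   A x^(m+1) - lambda sum_i x_i^(m+1) by a polynomial in the step t, vanishing
   at t = 0, whose linear coefficient is (m + 1) ((A c^m)_j - lambda c_j^m) by
   symmetry of A.  Steps t >= 0 keep c nonnegative, so this coefficient is
   <= 0; if c_j > 0 small negative steps are allowed too and it vanishes,
   while if c_j = 0 strong positive semi-definiteness gives (A c^m)_j >= 0.
   Hence (lambda, c) is an H-eigenpair.  Since m is even, comparing the two
   sides of A x^m = lambda x^[m] at a coordinate with x_i <> 0 gives the sign
   of every H-eigenvalue. *)

Section PolyDeriv.
Variable R : comNzRingType.

Lemma coef1_horner_deriv (p : {poly R}) : p`_1 = (p^`()).[0].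
Proof. by rewrite horner_coef0 coef_deriv. Qed.

Lemma deriv_big_prod (I : eqType) (r : seq I) (p : I -> {poly R}) : uniq r ->
  (\prod_(i <- r) p i)^`() =
  \sum_(i <- r) (p i)^`() * \prod_(j <- r | j != i) p j.
Proof.
elim: r => [|a r IH] /=; first by rewrite !big_nil derivC.
case/andP => a_notin_r uniq_r; rewrite !big_cons derivM IH // big_distrr /= eqxx.
congr (_ + _).
  congr (_ * _); rewrite big_seq_cond [RHS]big_seq_cond; apply: eq_bigl => j.
  case: (boolP (j \in r)) => //= jr; case: eqP => // ja.
  by rewrite -ja jr in a_notin_r.
rewrite big_seq [RHS]big_seq; apply: eq_bigr => i ir; rewrite big_cons.
have -> : (a != i) by apply: contraNneq a_notin_r => ->.
by rewrite mulrCA.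
Qed.

End PolyDeriv.

Section PolyOneSidedMax.
Variable R : realFieldType.

Lemma poly_linear_approx (P : {poly R}) : exists2 M, 0 <= M &
  forall t, `|t| <= 1 -> `|P.[t] - P`_0 - P`_1 * t| <= M * t ^+ 2.
Proof.
exists (\sum_(i < size P) `|P`_i.+2|); first exact: sumr_ge0.
move=> t t_le1; rewrite (@horner_coef_wide _ (size P).+2) ?leqW //.
rewrite !big_ord_recl /= expr0 mulr1 expr1 /bump /=.
set S := (X in _ + (_ + X)); rewrite (_ : _ - _ - _ = S); last by ring.
rewrite /S big_distrl /=; apply: le_trans (ler_norm_sum _ _ _) _.
apply: ler_sum => i _; rewrite normrM -(real_normK (num_real t)).
apply: ler_wpM2l => //; rewrite normrX !exprS mulrA -expr2 expr0 mulr1 -expr2.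
by rewrite ler_piMr ?exprn_ge0 ?exprn_ile1.
Qed.

(* The quadratic remainder of [poly_linear_approx] is beaten by the linear
   term on a short enough interval. *)
Lemma coef1_le0_of_onesided_max (P : {poly R}) (s d : R) :
  0 < d -> `|s| <= 1 -> (forall t, 0 <= t <= d -> P.[s * t] <= P.[0]) ->
  s * P`_1 <= 0.
Proof.
move=> d_gt0 s_le1 Pmax; rewrite leNgt; apply/negP => slope_gt0.
have [M M_ge0 approx] := poly_linear_approx P.
pose t := Order.min (Order.min d 1) (s * P`_1 / (2 * (M + 1))).
have t_gt0 : 0 < t.
  by rewrite !lt_min d_gt0 ltr01 divr_gt0 // mulr_gt0 // ltr_wpDl.
have t_le_d : t <= d by rewrite /t !ge_min lexx.
have t_le1 : t <= 1 by rewrite /t !ge_min lexx orbT.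
have t_small : t * (2 * (M + 1)) <= s * P`_1.
  by rewrite -ler_pdivlMr ?mulr_gt0 ?ltr_wpDl // /t ge_min lexx orbT.
have st_le1 : `|s * t| <= 1.
  by rewrite normrM (ger0_norm (ltW t_gt0)) mulr_ile1 ?normr_ge0 ?(ltW t_gt0).
have sq_st : (s * t) ^+ 2 <= t ^+ 2.
  rewrite exprMn -(real_normK (num_real s)).
  by rewrite ler_piMl ?exprn_ge0 ?exprn_ile1 ?normr_ge0 ?(ltW t_gt0).
have := Pmax t; rewrite (ltW t_gt0) t_le_d horner_coef0 => /(_ isT) Pst_le.
have /ler_normlP [remainder_ge _] := approx _ st_le1.
have := ler_wpM2l M_ge0 sq_st; have := ler_wpM2l (ltW t_gt0) t_small.
have : 0 < t ^+ 2 by rewrite exprn_gt0.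
have : 0 <= M * t ^+ 2 by rewrite mulr_ge0 ?exprn_ge0 // ltW.
lra.
Qed.

End PolyOneSidedMax.

Section Simplex.
Variables (R : realType) (n : nat).

Definition simplex (x : 'I_n -> R) := (forall i, 0 <= x i) /\ \sum_i x i = 1.

Lemma simplex_normalize (y : 'I_n -> R) :
  (forall i, 0 <= y i) -> 0 < \sum_i y i ->
  simplex (fun i => (\sum_k y k)^-1 * y i).
Proof.
move=> y_ge0 sum_gt0; split=> [i|].
  by rewrite mulr_ge0 ?invr_ge0 ?y_ge0 ?ltW.
by rewrite -mulr_sumr mulVf ?gt_eqF.
Qed.

Lemma compact_simplex : compact [set v : 'rV[R]_n | simplex (v ord0)].
Proof.
have -> : [set v : 'rV[R]_n | simplex (v ord0)] =
    [set v : 'rV[R]_n | forall i, `[0, 1]%classic (v ord0 i)] `&`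
    (fun v : 'rV[R]_n => \sum_i v ord0 i) @^-1` [set 1].
  apply/seteqP; split=> v /=.
    move=> [v_ge0 v_sum]; split=> // i; rewrite in_itv /= v_ge0 -v_sum.
    by rewrite (bigD1 i) //= lerDl sumr_ge0.
  move=> [v01 v_sum]; split=> // i.
  by have := v01 i; rewrite in_itv /= => /andP[].
apply: compact_closedI; first exact: rV_compact (fun=> @segment_compact R 0 1).
apply: (proj1 (continuous_closedP _)); last exact: closed_eq.
apply: continuous_big => [|i _]; first exact: add_continuous.
exact: coord_continuous.
Qed.

Lemma simplex_argmax (f : ('I_n -> R) -> R) : (0 < n)%N ->
  (forall v : 'rV[R]_n, simplex (v ord0) ->
     {for v, continuous (fun w : 'rV[R]_n => f (w ord0))}) ->
  exists2 c, simplex c & forall y, simplex y -> f y <= f c.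
Proof.
move=> n_gt0 f_cont.
have [||c /set_mem c_simplex c_max] :=
  @compact_EVT_max _ _ (fun w : 'rV[R]_n => f (w ord0)) _ _ compact_simplex.
- pose i0 := Ordinal n_gt0; exists (\row_i (i == i0)%:R); split=> [i|].
    by rewrite mxE ler0n.
  rewrite (bigD1 i0) //= mxE eqxx big1 ?addr0 // => j /negbTE j_neq_i0.
  by rewrite mxE j_neq_i0.
- by apply: continuous_in_subspaceT => v /set_mem; exact: f_cont.
exists (c ord0) => // y y_simplex.
have row_y : (\row_i y i) ord0 = y by apply/funext=> i; rewrite mxE.
by rewrite -row_y; apply: c_max; apply: mem_set; rewrite /= row_y.
Qed.

End Simplex.

Section TensorForm.
Variables (R : realType) (m n : nat) (A : tensor R m.+1 n).
Implicit Types (x : 'I_n -> R) (j : 'I_n).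

Definition idx_tail (idx : {ffun 'I_m.+1 -> 'I_n}) : {ffun 'I_m -> 'I_n} :=
  [ffun k => idx (lift ord0 k)].

Lemma cons_idx0 j (jv : {ffun 'I_m -> 'I_n}) : @cons_idx m.+1 n j jv ord0 = j.
Proof. by rewrite ffunE. Qed.

Lemma cons_idx_lift j (jv : {ffun 'I_m -> 'I_n}) k :
  @cons_idx m.+1 n j jv (lift ord0 k) = jv k.
Proof.
rewrite ffunE /= add0n insubT ?ltn_ord //= => k_lt.
by congr (jv _); apply: val_inj.
Qed.

Lemma idx_tail_cons j (jv : {ffun 'I_m -> 'I_n}) :
  idx_tail (@cons_idx m.+1 n j jv) = jv.
Proof. by apply/ffunP => k; rewrite ffunE cons_idx_lift. Qed.

Lemma cons_idx_tail j (idx : {ffun 'I_m.+1 -> 'I_n}) :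
  idx ord0 = j -> @cons_idx m.+1 n j (idx_tail idx) = idx.
Proof.
move=> idx0; apply/ffunP => l; case: (unliftP ord0 l) => [k ->|->].
  by rewrite cons_idx_lift ffunE.
by rewrite cons_idx0.
Qed.

Definition tcontract x j (k : 'I_m.+1) :=
  \sum_(idx : {ffun 'I_m.+1 -> 'I_n})
     A idx * ((idx k == j)%:R * \prod_(l < m.+1 | l != k) x (idx l)).

Lemma tcontract0 x j : tcontract x j ord0 = tapply A x j.
Proof.
rewrite /tcontract /tapply.
under eq_bigr => idx _ do rewrite mulrCA mulr_natl mulrb.
rewrite -big_mkcond /= (reindex_onto (@cons_idx m.+1 n j) idx_tail); last first.
  by move=> idx /eqP; exact: cons_idx_tail.
apply: eq_big => [jv|jv _]; first by rewrite cons_idx0 idx_tail_cons !eqxx.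
rewrite big_mkcond big_ord_recl /= mul1r; congr (_ * _).
by apply: eq_bigr => k _; rewrite cons_idx_lift.
Qed.

Lemma tcontract_slot x j k :
  symmetric_tensor A -> tcontract x j k = tcontract x j ord0.
Proof.
move=> symA; rewrite /tcontract; pose s := tperm k ord0.
have permute_inj :
    injective (fun idx : {ffun 'I_m.+1 -> 'I_n} => [ffun l => idx (s l)]).
  move=> i1 i2 /ffunP eq12; apply/ffunP => l; have := eq12 (s l).
  by rewrite !ffunE tpermK.
rewrite (reindex_inj permute_inj); apply: eq_bigr => idx _.
rewrite symA ffunE tpermL; congr (_ * (_ * _)).
rewrite (reindex_inj (@perm_inj _ s)); apply: eq_big => [l|l _].
  by rewrite -(tpermR k ord0) (inj_eq (@perm_inj _ s)).
by rewrite ffunE tpermK.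
Qed.

Definition tform x :=
  \sum_(idx : {ffun 'I_m.+1 -> 'I_n}) A idx * \prod_(k < m.+1) x (idx k).

Definition powsum x := \sum_i x i ^+ m.+1.

Definition shift x j t := fun i => x i + (i == j)%:R * t.

Definition shift_poly x j i : {poly R} := (x i)%:P + (i == j)%:R *: 'X.

Lemma horner_shift_poly x j i t : (shift_poly x j i).[t] = shift x j t i.
Proof. by rewrite /shift_poly hornerD hornerC hornerZ hornerX. Qed.

Lemma deriv_shift_poly x j i : (shift_poly x j i)^`() = (i == j)%:R%:P.
Proof. by rewrite /shift_poly derivD derivC derivZ derivX add0r alg_polyC. Qed.

Definition tform_poly x j : {poly R} :=
  \sum_(idx : {ffun 'I_m.+1 -> 'I_n})
    A idx *: \prod_(k < m.+1) shift_poly x j (idx k).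

Definition powsum_poly x j : {poly R} := \sum_i shift_poly x j i ^+ m.+1.

Lemma horner_tform_poly x j t : (tform_poly x j).[t] = tform (shift x j t).
Proof.
rewrite horner_sum; apply: eq_bigr => idx _.
by rewrite hornerZ horner_prod; under eq_bigr do rewrite horner_shift_poly.
Qed.

Lemma horner_powsum_poly x j t : (powsum_poly x j).[t] = powsum (shift x j t).
Proof.
by rewrite horner_sum; under eq_bigr do rewrite horner_exp horner_shift_poly.
Qed.

(* By symmetry each of the [m.+1] slots contributes the same contraction. *)
Lemma tform_poly_coef1 x j :
  symmetric_tensor A -> (tform_poly x j)`_1 = m.+1%:R * tapply A x j.
Proof.
move=> symA; rewrite coef1_horner_deriv /tform_poly.
rewrite (big_morph _ (@derivD R) (@deriv0 R)) horner_sum.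
under eq_bigr => idx _.
  rewrite derivZ hornerZ deriv_big_prod ?index_enum_uniq // horner_sum big_distrr.
  under eq_bigr => k _ do rewrite hornerM deriv_shift_poly hornerC horner_prod.
  over.
rewrite exchange_big /=.
under eq_bigr => k _.
  under eq_bigr => idx _ do under eq_bigr => l _ do
    rewrite horner_shift_poly /shift mulr0 addr0.
  rewrite -/(tcontract x j k) tcontract_slot // tcontract0.
  over.
by rewrite sumr_const card_ord mulr_natl.
Qed.

Lemma powsum_poly_coef1 x j : (powsum_poly x j)`_1 = m.+1%:R * x j ^+ m.
Proof.
rewrite coef1_horner_deriv /powsum_poly (big_morph _ (@derivD R) (@deriv0 R)).
rewrite horner_sum (bigD1 j) //= big1 ?addr0.
  rewrite deriv_exp deriv_shift_poly hornerMn hornerM hornerC horner_exp.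
  by rewrite horner_shift_poly /shift eqxx mulr0 addr0 mul1r mulr_natl.
move=> i /negbTE i_ne_j; rewrite deriv_exp deriv_shift_poly i_ne_j.
by rewrite hornerMn hornerM hornerC mul0r mul0rn.
Qed.

Lemma sum_shift x j t : \sum_i shift x j t i = \sum_i x i + t.
Proof.
rewrite big_split /=; congr (_ + _).
by rewrite (bigD1 j) //= eqxx mul1r big1 ?addr0 // => i /negbTE ->; rewrite mul0r.
Qed.

Lemma shift0 x j : shift x j 0 = x.
Proof. by apply/funext => i; rewrite /shift mulr0 addr0. Qed.

Lemma tformZ a x : tform (fun i => a * x i) = a ^+ m.+1 * tform x.
Proof.
rewrite /tform big_distrr; apply: eq_bigr => idx _.
by rewrite big_split /= prodr_const card_ord mulrCA.
Qed.

Lemma powsumZ a x : powsum (fun i => a * x i) = a ^+ m.+1 * powsum x.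
Proof. by rewrite /powsum big_distrr; apply: eq_bigr => i _; rewrite exprMn. Qed.

Lemma powsum_gt0 x : (forall i, 0 <= x i) -> 0 < \sum_i x i -> 0 < powsum x.
Proof.
move=> x_ge0 sum_gt0.
have /hasP[i _ /= xi_gt0] : has (fun i => true && (0 < x i)) (index_enum 'I_n).
  by rewrite -psumr_neq0 ?gt_eqF.
rewrite /powsum (bigD1 i) //= ltr_wpDr ?exprn_gt0 ?sumr_ge0 // => k _.
by rewrite exprn_ge0.
Qed.

Lemma powsum_simplex_gt0 x : simplex x -> 0 < powsum x.
Proof. by case=> x_ge0 x_sum; rewrite powsum_gt0 // x_sum. Qed.

Lemma continuous_tform : continuous (fun w : 'rV[R]_n => tform (w ord0)).
Proof.
rewrite /tform.
apply: (@continuous_big R {ffun 'I_m.+1 -> 'I_n} +%R 0 xpredT add_continuous).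
move=> idx _.
have prod_cont : continuous (fun w : 'rV[R]_n => \prod_(k < m.+1) w ord0 (idx k)).
  apply: (@continuous_big R 'I_m.+1 *%R 1 xpredT mul_continuous) => k _.
  exact: coord_continuous.
by move=> w; apply: continuousM; [exact: cst_continuous | exact: prod_cont].
Qed.

Lemma continuous_powsum : continuous (fun w : 'rV[R]_n => powsum (w ord0)).
Proof.
rewrite /powsum.
apply: (@continuous_big R 'I_n +%R 0 xpredT add_continuous) => i _.
under eq_fun do rewrite -[m.+1](card_ord m.+1) -prodr_const.
apply: (@continuous_big R 'I_m.+1 *%R 1 xpredT mul_continuous) => k _.
exact: coord_continuous.
Qed.

End TensorForm.

Section ArgmaxEigenpair.
Variables (R : realType) (m n : nat) (A : tensor R m.+1 n) (c : 'I_n -> R).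
Hypotheses (symA : symmetric_tensor A) (c_simplex : simplex c).
Hypothesis c_max :
  forall y, simplex y -> tform A y / powsum m y <= tform A c / powsum m c.

Local Notation lambda := (tform A c / powsum m c).

Lemma tform_le_argmax y :
  (forall i, 0 <= y i) -> 0 < \sum_i y i -> tform A y <= lambda * powsum m y.
Proof.
move=> y_ge0 sum_gt0; have := c_max (simplex_normalize y_ge0 sum_gt0).
rewrite tformZ powsumZ -mulf_div divff ?mul1r ?expf_neq0 ?invr_eq0 ?gt_eqF //.
by rewrite ler_pdivrMr // powsum_gt0.
Qed.

(* [t |-> tform (c + t e_j) - lambda powsum (c + t e_j)] is a polynomial
   vanishing at [0] and nonpositive wherever [c + t e_j] stays nonnegative. *)
Lemma argmax_directional j (s d : R) :
  0 < d < 1 -> `|s| <= 1 ->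
  (forall t, 0 <= t <= d -> forall i, 0 <= shift c j (s * t) i) ->
  s * (tapply A c j - lambda * c j ^+ m) <= 0.
Proof.
move=> /andP[d_gt0 d_lt1] s_le1 shift_ge0.
pose P := tform_poly A c j - lambda *: powsum_poly m c j.
have horner_P t : P.[t] = tform A (shift c j t) - lambda * powsum m (shift c j t).
  by rewrite hornerD hornerN hornerZ horner_tform_poly horner_powsum_poly.
have P1 : P`_1 = m.+1%:R * (tapply A c j - lambda * c j ^+ m).
  by rewrite coefB coefZ tform_poly_coef1 // powsum_poly_coef1; ring.
have m1_gt0 : 0 < m.+1%:R :> R by rewrite ltr0n.
rewrite -(pmulr_rle0 _ m1_gt0) mulrCA -P1.
apply: (coef1_le0_of_onesided_max d_gt0 s_le1) => t /andP[t_ge0 t_le_d].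
rewrite !horner_P shift0 divfK ?gt_eqF ?powsum_simplex_gt0 // subrr subr_le0.
apply: tform_le_argmax; first by apply: shift_ge0; rewrite t_ge0 t_le_d.
rewrite sum_shift (proj2 c_simplex).
have : `|s * t| <= d by rewrite normrM (ger0_norm t_ge0) -[d]mul1r ler_pM.
by rewrite ler_norml => /andP[]; lra.
Qed.

Lemma argmax_eigen j :
  (0 < m)%N -> strongly_psd A -> tapply A c j = lambda * c j ^+ m.
Proof.
move=> m_gt0 psdA; have [c_ge0 c_sum] := c_simplex.
have half : 0 < (2 : R)^-1 < 1 by apply/andP; split; lra.
have upper : tapply A c j - lambda * c j ^+ m <= 0.
  rewrite -[_ - _]mul1r.
  apply: (argmax_directional half) => [|t /andP[t_ge0 _] i].
    by rewrite normr1.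
  by rewrite /shift mul1r addr_ge0 ?mulr_ge0.
apply/eqP; rewrite -subr_eq0 eq_le upper /=.
have [cj0 | cj_neq0] := eqVneq (c j) 0.
  by rewrite cj0 expr0n gtn_eqF // mulr0 subr0 psdA.
have cj_gt0 : 0 < c j by rewrite lt0r cj_neq0 c_ge0.
have cj_le1 : c j <= 1 by rewrite -c_sum (bigD1 j) //= lerDl sumr_ge0.
rewrite -oppr_le0 -mulN1r; apply: (@argmax_directional j (-1) (c j / 2)).
- by apply/andP; split; lra.
- by rewrite normrN normr1.
- move=> t /andP[t_ge0 t_le] i; rewrite /shift; case: eqP => [->|_].
    by rewrite mul1r; lra.
  by rewrite mul0r addr0.
Qed.

End ArgmaxEigenpair.

Lemma strongly_psd_H_eigenvalue (R : realType) (m n : nat) (A : tensor R m.+1 n) :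
  (0 < m)%N -> (0 < n)%N -> symmetric_tensor A -> strongly_psd A ->
  exists lambda, H_eigenvalue A lambda.
Proof.
move=> m_gt0 n_gt0 symA psdA.
have [|c c_simplex c_max] :=
  @simplex_argmax R n (fun x => tform A x / powsum m x) n_gt0.
  move=> v /powsum_simplex_gt0 v_pos; apply: continuousM.
    exact: continuous_tform.
  by apply: continuousV; [rewrite gt_eqF | exact: continuous_powsum].
exists (tform A c / powsum m c), c; split=> [|i]; last exact: argmax_eigen.
have [c_ge0 c_sum] := c_simplex.
have /hasP[i _ /= ci_gt0] : has (fun i => true && (0 < c i)) (index_enum 'I_n).
  by rewrite -psumr_neq0 // c_sum oner_neq0.
by exists i; rewrite gt_eqF.
Qed.

Section EigenvalueSign.
Variables (R : realType) (m n : nat) (A : tensor R m n).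
Hypothesis even_m1 : ~~ odd m.-1.

Lemma H_eigenvalue_ge0 lambda :
  strongly_psd A -> H_eigenvalue A lambda -> 0 <= lambda.
Proof.
move=> psdA [x [[i xi_neq0] eig]]; have := psdA x i.
by rewrite eig pmulr_lge0 // exprn_even_gt0 // xi_neq0 orbT.
Qed.

Lemma H_eigenvalue_gt0 lambda :
  strongly_pd A -> H_eigenvalue A lambda -> 0 < lambda.
Proof.
move=> pdA [x [[i xi_neq0] eig]]; have := pdA x (ex_intro _ i xi_neq0) i.
by rewrite eig pmulr_lgt0 // exprn_even_gt0 // xi_neq0 orbT.
Qed.

End EigenvalueSign.

Lemma strongly_pd_psd (R : realType) (m n : nat) (A : tensor R m n) :
  (0 < m.-1)%N -> strongly_pd A -> strongly_psd A.
Proof.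
move=> m1_gt0 pdA x i; have [[k xk_neq0] | x_eq0] := pselect (exists k, x k != 0).
  by apply/ltW/pdA; exists k.
have x0 k : x k = 0 by apply/eqP/negPn/negP => xk_neq0; apply: x_eq0; exists k.
rewrite /tapply big1 // => jv _.
by rewrite (bigD1 (Ordinal m1_gt0)) //= x0 mul0r mulr0.
Qed.

Theorem theorem3p3 (R : realType) (m n : nat) (A : tensor R m n) :
  (3 <= m)%N -> odd m -> (2 <= n)%N -> symmetric_tensor A ->
  (strongly_psd A -> genuinely_psd A) /\
  (strongly_pd A -> genuinely_pd A).
Proof.
move=> m_ge3 odd_m n_ge2 symA.
have even_m1 : ~~ odd m.-1 by case: (m) odd_m.
have m1_gt0 : (0 < m.-1)%N by case: (m) m_ge3 => [|[|[|k]]].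
have psd_has_eigenvalue : strongly_psd A -> exists lambda, H_eigenvalue A lambda.
  move: A symA m1_gt0; case: m {m_ge3 odd_m even_m1} => // m A symA m_gt0 psdA.
  exact: strongly_psd_H_eigenvalue m_gt0 (leq_trans _ n_ge2) symA psdA.
split=> [psdA | pdA]; split.
- exact: psd_has_eigenvalue.
- by move=> lambda; exact: H_eigenvalue_ge0.
- exact/psd_has_eigenvalue/strongly_pd_psd.
- by move=> lambda; exact: H_eigenvalue_gt0.
Qed.
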